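(* Let $f(t)\in\mathcal{O}_{\mathbb{C}_p}[[t]]$ be a power series with $f(0)\in E_p$ and $f'(0)\in U_1$. Then there is a unique $\phi\in C(\mathbb{Z}_p,\mathbb{C}_p)$ such that, as formal power series, $$\exp(f(0))\exp\big(f(t)-f(0)\big)=\sum_{n=0}^\infty\phi(n)\frac{t^n}{n!}\;(=A(\phi)).$$
   Context: Fix a prime $p$; $\mathbb{C}_p$ is the completion of an algebraic closure of $\mathbb{Q}_p$ with $|p|=1/p$. $\mathcal{O}_{\mathbb{C}_p}=\{x\in\mathbb{C}_p:|x|\le1\}$, $U_1=\{x\in\mathbb{C}_p:|x-1|<1\}$, and $E_p=\{x\in\mathbb{C}_p:|x|<p^{-1/(p-1)}\}$, the domain of convergence of the exponential series $\exp$. Since $f(t)-f(0)$ has no constant term, $\exp(f(t)-f(0))$ is a well-defined formal power series. $C(\mathbb{Z}_p,\mathbb{C}_p)$ is the space of continuous functions $\mathbb{Z}_p\to\mathbb{C}_p$, and for such $\phi$, $A(\phi)=\sum_{n\ge0}\phi(n)t^n/n!$. *)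

From HB Require Import structures.
From mathcomp Require Import all_boot all_order all_algebra.
From mathcomp Require Import reals exp.
Set Implicit Arguments. Unset Strict Implicit. Unset Printing Implicit Defensive.
Import Order.TTheory GRing.Theory Num.Theory.
Local Open Scope ring_scope.

Section Defs.
Variables (R : realType) (K : fieldType) (abs : K -> R).

Definition is_lim (u : nat -> K) (l : K) : Prop :=
  forall eps : R, 0 < eps -> exists N : nat, forall n : nat, (N <= n)%N -> abs (u n - l) < eps.

Definition is_cauchy (u : nat -> K) : Prop :=
  forall eps : R, 0 < eps -> exists N : nat,
    forall m n : nat, (N <= m)%N -> (N <= n)%N -> abs (u m - u n) < eps.

(* (K, abs) is (a copy of) C_p: a field of characteristic 0 with a
   nonarchimedean absolute value normalised by |p| = 1/p, which is complete,
   algebraically closed, and in which the algebraic numbers (the algebraic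
   closure of Q, hence of Q_p) are dense.  This characterises C_p up to
   isometric isomorphism. *)
Record is_Cp (p : nat) : Prop := IsCp {
  Cp_abs_ge0 : forall x, 0 <= abs x;
  Cp_abs_eq0 : forall x, abs x = 0 <-> x = 0;
  Cp_abs_mul : forall x y, abs (x * y) = abs x * abs y;
  Cp_abs_ultra : forall x y, abs (x + y) <= Num.max (abs x) (abs y);
  Cp_abs_p : abs (p%:R) = (p%:R)^-1;
  Cp_char0 : forall n : nat, (n%:R : K) = 0 -> n = 0%N;
  Cp_complete : forall u, is_cauchy u -> exists l, is_lim u l;
  Cp_alg_closed : forall P : {poly K}, (1 < size P)%N -> exists x, root P x;
  Cp_alg_dense : forall (x : K) (eps : R), 0 < eps ->
     exists y : K, (exists q : {poly rat}, q != 0 /\ root (map_poly ratr q) y)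
                   /\ abs (x - y) < eps
}.

Definition exp_partial (x : K) (N : nat) : K :=
  \sum_(k < N) x ^+ k / (k`!)%:R.

(* formal power series = coefficient sequences *)
Definition fps_mul (a b : nat -> K) (n : nat) : K :=
  \sum_(i < n.+1) a i * b (n - i)%N.

Fixpoint fps_pow (g : nat -> K) (k : nat) : nat -> K :=
  match k with
  | 0 => fun n => if n == 0%N then 1 else 0
  | k'.+1 => fps_mul g (fps_pow g k')
  end.

(* formal exp(g) for g with zero constant term: coefficient of t^n is
   sum_{k<=n} [t^n] g^k / k!  (terms with k > n vanish) *)
Definition fps_exp (g : nat -> K) (n : nat) : K :=
  \sum_(k < n.+1) fps_pow g k n / (k`!)%:R.

Definition fps_drop_const (f : nat -> K) (n : nat) : K :=
  if n == 0%N then 0 else f n.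

End Defs.

(* Z_p as the inverse limit of Z/p^k: compatible sequences of residues *)
Definition Zpadic (p : nat) : Type :=
  {x : nat -> nat | forall k, (x k %% p ^ k = x k /\ x k.+1 %% p ^ k = x k)%N}.

Lemma to_Zp_proof (p n : nat) :
  forall k, ((n %% p ^ k) %% p ^ k = n %% p ^ k /\ (n %% p ^ k.+1) %% p ^ k = n %% p ^ k)%N.
Proof.
move=> k; split; first exact: modn_mod.
by rewrite modn_dvdm // expnS dvdn_mull.
Qed.

Definition to_Zp (p n : nat) : Zpadic p :=
  exist _ (fun k => (n %% p ^ k)%N) (to_Zp_proof p n).

Definition Zp_continuous (p : nat) (R : realType) (K : fieldType) (abs : K -> R)
  (phi : Zpadic p -> K) : Prop :=
  forall (x : Zpadic p) (eps : R), 0 < eps -> exists k : nat,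
    forall y : Zpadic p, sval y k = sval x k -> abs (phi y - phi x) < eps.

From HB Require Import structures.
From mathcomp Require Import all_boot all_order all_algebra.
From mathcomp Require Import reals exp.
From mathcomp Require Import zify ring lra.
From mathcomp Require Import boolp.
Import Order.TTheory GRing.Theory Num.Theory.
Local Open Scope ring_scope.
Set Implicit Arguments. Unset Strict Implicit. Unset Printing Implicit Defensive.

(* Write f(t) - f(0) = t + h(t), where h has integral coefficients, no constant
   term and |h_1| = |f'(0) - 1| < 1.  From exp(t + h) = exp(t) exp(h), the
   coefficient of t^n/n! in exp(f(t) - f(0)) is the Mahler series
   sum_m C(n, m) a_m, where a_m = m! [t^m] exp(h).  The contribution of h^j to
   a_m is bounded by |m!/j!| |h_1|^(2j - m), so the a_m are integral and tend
   to 0.  Since C(n, k) = n^_k / k! and |k!| >= p^-k, a Mahler series with null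
   coefficients is uniformly continuous for the p-adic metric on N, hence
   extends uniquely to a continuous function on Z_p.  Finally exp(f(0))
   converges because Legendre's formula gives |x^k / k!| <= (|x| p^(1/(p-1)))^k. *)

Lemma legendre_partial_le p n m : (1 < p)%N ->
  (p.-1 * \sum_(1 <= k < m.+1) n %/ p ^ k + n %/ p ^ m <= n)%N.
Proof.
move=> p_gt1; elim: m => [|m IHm]; first by rewrite big_geq // muln0 expn0 divn1.
rewrite big_nat_recr //= mulnDr -addnA; apply: leq_trans IHm; rewrite leq_add2l.
rewrite -[X in (_ + X)%N]mul1n -mulnDl addn1 prednK ?(ltnW p_gt1) //.
by rewrite expnSr divnMA mulnC leq_divM.
Qed.

Lemma legendre_le p n : prime p -> (p.-1 * logn p n`! <= n)%N.
Proof.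
move=> p_pr; rewrite logn_fact //.
exact: leq_trans (leq_addr _ _) (legendre_partial_le n n (prime_gt1 p_pr)).
Qed.

Lemma logn_fact_le p n : prime p -> (logn p n`! <= n)%N.
Proof.
move=> p_pr; apply: leq_trans (legendre_le n p_pr).
by rewrite leq_pmull // -ltnS prednK ?prime_gt0 ?prime_gt1.
Qed.

Lemma dvdn_expn_fact p L n : prime p -> (p * L <= n)%N -> (p ^ L %| n`!)%N.
Proof.
move=> p_pr le_pL_n; rewrite pfactor_dvdn ?fact_gt0 // logn_fact //.
case: n le_pL_n => [|n] le_pL_n.
  by have -> : L = 0%N by move: le_pL_n; have := prime_gt0 p_pr; lia.
rewrite big_ltn // expn1; apply: leq_trans (leq_addr _ _).
by rewrite leq_divRL ?prime_gt0 // mulnC.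
Qed.

Lemma bernoulli_le (R : realFieldType) (y : R) n :
  0 <= y -> 1 + n%:R * y <= (1 + y) ^+ n.
Proof.
move=> y_ge0; elim: n => [|n IHn]; first by rewrite mul0r addr0 expr0.
rewrite exprS; apply: le_trans (_ : (1 + y) * (1 + n%:R * y) <= _); last first.
  by rewrite ler_wpM2l // addr_ge0.
have n_ge0 : 0 <= n%:R :> R := ler0n _ n.
rewrite -nat1r; nra.
Qed.

Lemma expr_eventually_lt (R : archiRealFieldType) (q eps : R) :
  0 <= q -> q < 1 -> 0 < eps -> exists N, forall n, (N <= n)%N -> q ^+ n < eps.
Proof.
move=> q_ge0 q_lt1 eps_gt0; have [->|q_neq0] := eqVneq q 0.
  by exists 1%N => -[|n] // _; rewrite expr0n.
have q_gt0 : 0 < q by rewrite lt0r q_neq0.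
pose y := q^-1 - 1.
have y_gt0 : 0 < y by rewrite subr_gt0 invf_gt1.
pose N := Num.bound (eps^-1 / y).
exists N => n le_Nn; apply: le_lt_trans (ler_wiXn2l q_ge0 (ltW q_lt1) le_Nn) _.
have -> : q = (1 + y)^-1 by rewrite /y addrC subrK invrK.
have lt_N : eps^-1 / y < N%:R by rewrite archi_boundP // divr_ge0 // ltW // invr_gt0.
have pow_gt0 : 0 < (1 + y) ^+ N by rewrite exprn_gt0 // addr_gt0.
rewrite exprVn -[eps]invrK ltf_pV2 ?posrE ?invr_gt0 //.
have : eps^-1 < N%:R * y by rewrite -ltr_pdivrMr.
by have := bernoulli_le N (ltW y_gt0); lra.
Qed.

Lemma natr_ffact (R : comPzRingType) (n k : nat) :
  ((n ^_ k)%:R : R) = \prod_(i < k) (n%:R - i%:R).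
Proof.
elim: k => [|k IHk]; first by rewrite big_ord0 ffactn0.
rewrite big_ord_recr /= -IHk ffactnSr natrM.
by case: (leqP k n) => [le_kn|lt_nk]; [rewrite natrB | rewrite ffact_small // !mul0r].
Qed.

Lemma big_ord_subn_mkcond (V : nmodType) n a (F : nat -> V) : (a <= n)%N ->
  \sum_(b < n.+1 - a) F b = \sum_(b < n.+1) if (a + b <= n)%N then F b else 0.
Proof.
move=> le_an; rewrite (big_ord_widen _ _ (leq_subr a n.+1)) big_mkcond.
by apply: eq_bigr => b _; congr (if _ then _ else _); apply/idP/idP; lia.
Qed.

Lemma sum_antidiagonal (V : nmodType) (F : nat -> nat -> V) n :
  \sum_(k < n.+1) \sum_(i < k.+1) F i (k - i)%N =
  \sum_(m < n.+1) \sum_(j < m.+1) F j (n - m)%N.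
Proof.
pose S := \sum_(i < n.+1) \sum_(l < n.+1) if (i + l <= n)%N then F i l else 0.
have -> : \sum_(k < n.+1) \sum_(i < k.+1) F i (k - i)%N = S.
  rewrite (eq_bigr (fun k : 'I_n.+1 => \sum_(i < n.+1 | (i <= k)%N) F i (k - i)%N));
    last by move=> k _; rewrite (big_ord_widen _ (fun i => F i (k - i)%N) (ltn_ord k)).
  rewrite (exchange_big_dep xpredT) //=; apply: eq_bigr => i _.
  have le_in : (i <= n)%N by rewrite -ltnS.
  have -> : \sum_(k < n.+1 | (i <= k)%N) F i (k - i)%N =
      \sum_(i <= k < n.+1) F i (k - i)%N by rewrite big_geq_mkord.
  rewrite -big_ord_subn_mkcond // -{1}[nat_of_ord i]add0n.
  by rewrite big_addn big_mkord; apply: eq_bigr => l _; rewrite addnK.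
rewrite (reindex_inj rev_ord_inj) /= /S exchange_big /=; apply: eq_bigr => l _.
have le_ln : (l <= n)%N by rewrite -ltnS.
rewrite subSS subKn // -subSn // (big_ord_subn_mkcond (F^~ l)) //.
by apply: eq_bigr => j _; rewrite addnC.
Qed.

Section FormalExp.
Variable K : fieldType.

Lemma fps_pow_coef (g : nat -> K) (A : {poly K}) N :
  (forall i, (i <= N)%N -> A`_i = g i) ->
  forall k i, (i <= N)%N -> fps_pow g k i = (A ^+ k)`_i.
Proof.
move=> eq_Ag; elim=> [|k IHk] i le_iN; first by rewrite expr0 coef1 /=; case: (i == 0%N).
rewrite exprS coefM /= /fps_mul; apply: eq_bigr => -[j lt_ji] _ /=.
by rewrite eq_Ag ?IHk //; lia.
Qed.

Hypothesis fact_neq0 : forall k, (k`!)%:R != 0 :> K.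

Lemma natr_binE n m : (m <= n)%N ->
  'C(n, m)%:R = (n`!)%:R / ((m`!)%:R * ((n - m)`!)%:R) :> K.
Proof. by move=> le_mn; rewrite -(bin_fact le_mn) !natrM mulfK // mulf_neq0. Qed.

(* exp(t + h(t)) = exp(t) exp(h(t)), read off at the coefficient of t^n / n! *)
Lemma fps_exp_X_add (g h : nat -> K) n :
  (forall i, g i = (i == 1%N)%:R + h i) ->
  (n`!)%:R * fps_exp g n =
  \sum_(m < n.+1) 'C(n, m)%:R * ((m`!)%:R * fps_exp h m).
Proof.
move=> eq_g.
pose P : {poly K} := \poly_(i < n.+1) h i.
have coefP i : (i <= n)%N -> P`_i = h i by rewrite coef_poly ltnS => ->.
have coefXP i : (i <= n)%N -> ('X + P)`_i = g i.
  by move=> le_in; rewrite coefD coefX coefP // eq_g.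
pose term j l := (n`!)%:R / ((j`!)%:R * (l`!)%:R) * (P ^+ j)`_(n - l).
have -> : (n`!)%:R * fps_exp g n = \sum_(k < n.+1) \sum_(i < k.+1) term i (k - i)%N.
  rewrite /fps_exp mulr_sumr; apply: eq_bigr => -[k lt_kn] _ /=.
  rewrite (fps_pow_coef coefXP) // exprDn coef_sum mulr_suml mulr_sumr.
  apply: eq_bigr => -[i lt_ik] _ /=.
  rewrite coefMn coefXnM ifF; last by lia.
  by rewrite -[_ *+ 'C(k, i)]mulr_natr natr_binE // /term; field; rewrite !fact_neq0.
have -> : \sum_(m < n.+1) 'C(n, m)%:R * ((m`!)%:R * fps_exp h m) =
    \sum_(m < n.+1) \sum_(j < m.+1) term j (n - m)%N.
  apply: eq_bigr => -[m lt_mn] _ /=.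
  rewrite /fps_exp !mulr_sumr; apply: eq_bigr => -[j lt_jm] _ /=.
  rewrite (fps_pow_coef coefP) /term ?subKn ?natr_binE //; try lia.
  by field; rewrite !fact_neq0.
exact: sum_antidiagonal.
Qed.

End FormalExp.

Lemma Zpadic_modn p (x : Zpadic p) N M : (N <= M)%N -> (sval x M %% p ^ N = sval x N)%N.
Proof.
elim: M => [|M IHM] le_NM.
  by move: le_NM; rewrite leqn0 => /eqP ->; exact: (proj2_sig x 0%N).1.
case: (ltngtP N M.+1) le_NM => // [lt_NM _|-> _]; last exact: (proj2_sig x M.+1).1.
by rewrite -(modn_dvdm _ (dvdn_exp2l p (ltnSE lt_NM))) (proj2_sig x M).2 IHM.
Qed.

Section Ultrametric.
Variables (R : realType) (K : fieldType) (abs : K -> R).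
Hypotheses (abs_ge0 : forall x, 0 <= abs x) (abs_eq0 : forall x, abs x = 0 <-> x = 0)
  (absM : forall x y, abs (x * y) = abs x * abs y)
  (abs_ultra : forall x y, abs (x + y) <= Num.max (abs x) (abs y)).

Lemma abs0 : abs 0 = 0. Proof. exact/abs_eq0. Qed.

Lemma abs_gt0 x : x != 0 -> 0 < abs x.
Proof. by move=> x_neq0; rewrite lt0r abs_ge0 andbT; apply: contra_neq x_neq0 => /abs_eq0. Qed.

Lemma abs1 : abs 1 = 1.
Proof.
have abs1_neq0 : abs 1 != 0 by rewrite gt_eqF // abs_gt0 ?oner_eq0.
by apply: (mulfI abs1_neq0); rewrite -absM !mulr1.
Qed.

Lemma absN x : abs (- x) = abs x.
Proof.
suff absN1 : abs (-1) = 1 by rewrite -mulN1r absM absN1 mul1r.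
have : abs (-1) ^+ 2 = 1 by rewrite expr2 -absM mulrNN mulr1 abs1.
move/eqP; rewrite sqrf_eq1 => /orP[/eqP //|/eqP abs_eqN1].
by move: (abs_ge0 (-1)); rewrite abs_eqN1 ler0N1.
Qed.

Lemma abs_distC x y : abs (x - y) = abs (y - x).
Proof. by rewrite -absN opprB. Qed.

Lemma abs_add_le x y c : abs x <= c -> abs y <= c -> abs (x + y) <= c.
Proof. by move=> le_xc le_yc; apply: le_trans (abs_ultra x y) _; rewrite ge_max le_xc. Qed.

Lemma abs_add_lt x y c : abs x < c -> abs y < c -> abs (x + y) < c.
Proof. by move=> lt_xc lt_yc; apply: le_lt_trans (abs_ultra x y) _; rewrite gt_max lt_xc. Qed.

Lemma abs_sum_le (I : Type) (r : seq I) (P : pred I) (F : I -> K) c :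
  0 <= c -> (forall i, P i -> abs (F i) <= c) -> abs (\sum_(i <- r | P i) F i) <= c.
Proof.
move=> c_ge0 le_Fc; apply: (big_ind (fun x => abs x <= c)) => //.
- by rewrite abs0.
- by move=> x y; apply: abs_add_le.
Qed.

Lemma abs_nat_le1 n : abs n%:R <= 1.
Proof. by elim: n => [|n IHn]; rewrite ?abs0 // -addn1 natrD abs_add_le ?abs1. Qed.

Lemma abs_natB_le1 n m : abs (n%:R - m%:R) <= 1.
Proof. by apply: abs_add_le; rewrite ?absN abs_nat_le1. Qed.

Lemma absV x : abs x^-1 = (abs x)^-1.
Proof.
have [->|x_neq0] := eqVneq x 0; first by rewrite invr0 abs0 invr0.
have absx_neq0 : abs x != 0 by rewrite lt0r_neq0 ?abs_gt0.
by apply: (mulfI absx_neq0); rewrite -absM !mulfV ?abs1.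
Qed.

Lemma absX x n : abs (x ^+ n) = abs x ^+ n.
Proof. by elim: n => [|n IHn]; rewrite ?abs1 // !exprS absM IHn. Qed.

Lemma abs_prodB_le k (a b : nat -> K) d : 0 <= d ->
  (forall i, (i < k)%N -> [/\ abs (a i) <= 1, abs (b i) <= 1 & abs (a i - b i) <= d]) ->
  abs (\prod_(i < k) a i - \prod_(i < k) b i) <= d.
Proof.
move=> d_ge0; elim: k => [|k IHk] ab_bound; first by rewrite !big_ord0 subrr abs0.
rewrite !big_ord_recr /=.
have [le_a1 _ le_abd] := ab_bound k (ltnSn k).
have le_prodb1 : abs (\prod_(i < k) b i) <= 1.
  apply: (big_ind (fun x => abs x <= 1)); first by rewrite abs1.
    by move=> x y le_x1 le_y1; rewrite absM -[1]mulr1 ler_pM.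
  by move=> i _; have [] := ab_bound i (ltnW (ltn_ord i)).
have -> : \prod_(i < k) a i * a k - \prod_(i < k) b i * b k =
    (\prod_(i < k) a i - \prod_(i < k) b i) * a k + \prod_(i < k) b i * (a k - b k).
  by ring.
apply: abs_add_le; rewrite absM.
  by rewrite -[d]mulr1 ler_pM // IHk // => i lt_ik; apply: ab_bound; apply: ltnW.
by rewrite -[d]mul1r ler_pM.
Qed.

Lemma is_lim_unique (u : nat -> K) l1 l2 : is_lim abs u l1 -> is_lim abs u l2 -> l1 = l2.
Proof.
move=> lim1 lim2; apply/eqP/negPn/negP => neq_l.
have d_gt0 : 0 < abs (l1 - l2) by rewrite abs_gt0 // subr_eq0.
have [N1 HN1] := lim1 _ d_gt0; have [N2 HN2] := lim2 _ d_gt0.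
set N := maxn N1 N2.
have : abs ((u N - l2) - (u N - l1)) < abs (l1 - l2).
  by apply: abs_add_lt; rewrite ?absN (HN1, HN2) ?leq_maxl ?leq_maxr.
have -> : (u N - l2) - (u N - l1) = l1 - l2 by ring.
by rewrite ltxx.
Qed.

Lemma abs_lt_eq0 z : (forall eps : R, 0 < eps -> abs z < eps) -> z = 0.
Proof.
move=> small; apply/eqP/negPn/negP => z_neq0.
by have := small _ (abs_gt0 z_neq0); rewrite ltxx.
Qed.

(* A factor h_1 t of degree one costs r, every other factor raises the degree by at
   least two, so a product of j factors of total degree i has at least 2j - i
   linear factors. *)
Lemma abs_fps_pow_le (h : nat -> K) (r : R) : 0 <= r -> r <= 1 ->
  h 0%N = 0 -> abs (h 1%N) <= r -> (forall l, abs (h l) <= 1) ->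
  forall j i, abs (fps_pow h j i) <= r ^+ (2 * j - i).
Proof.
move=> r_ge0 r_le1 h0 le_h1 le_h; elim=> [|j IHj] i.
  by rewrite /=; case: (i == 0%N); rewrite ?abs1 ?abs0 // muln0 sub0n expr0.
apply: abs_sum_le; first exact: exprn_ge0.
move=> -[[|[|l]] lt_li] _ /=; rewrite absM.
- by rewrite h0 abs0 mul0r exprn_ge0.
- apply: le_trans (ler_pM (abs_ge0 _) (abs_ge0 _) le_h1 (IHj _)) _.
  by rewrite -exprS; apply: ler_wiXn2l => //; lia.
- apply: le_trans (ler_pM (abs_ge0 _) (abs_ge0 _) (le_h _) (IHj _)) _.
  by rewrite mul1r; apply: ler_wiXn2l => //; lia.
Qed.

Section PadicAbs.
Variable p : nat.
Hypotheses (p_prime : prime p) (abs_p : abs p%:R = p%:R^-1).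

Let invp : R := p%:R^-1.

Lemma invp_gt0 : 0 < invp. Proof. by rewrite invr_gt0 ltr0n prime_gt0. Qed.

Lemma invp_lt1 : invp < 1.
Proof. by rewrite invf_lt1 ?ltr0n ?prime_gt0 // ltr1n prime_gt1. Qed.

Lemma abs_natr_coprime m : coprime p m -> abs m%:R = 1.
Proof.
move=> p_m_coprime; apply/eqP; rewrite eq_le abs_nat_le1 leNgt; apply/negP => lt_m1.
have [a _] := Bezoutl m (prime_gt0 p_prime).
rewrite (eqP p_m_coprime) => /dvdnP[q def_qp].
have : abs ((q * p)%N%:R - (a * m)%N%:R) < 1.
  rewrite !natrM; apply: abs_add_lt; rewrite ?absN absM.
    rewrite abs_p; apply: le_lt_trans (ler_wpM2r (ltW invp_gt0) (abs_nat_le1 q)) _.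
    by rewrite mul1r invp_lt1.
  by apply: le_lt_trans (ler_wpM2r (abs_ge0 _) (abs_nat_le1 a)) _; rewrite mul1r.
by rewrite -def_qp natrD addrK abs1 ltxx.
Qed.

Lemma abs_natr_logn n : (0 < n)%N -> abs n%:R = invp ^+ logn p n.
Proof.
move=> n_gt0; have [m p_m_coprime {1}->] := pfactor_coprime p_prime n_gt0.
by rewrite natrM absM abs_natr_coprime // mul1r natrX absX abs_p.
Qed.

Lemma abs_natr_dvd_le n L : (p ^ L %| n)%N -> abs n%:R <= invp ^+ L.
Proof.
move=> /dvdnP[q ->]; rewrite natrM absM natrX absX abs_p.
by rewrite -[leRHS]mul1r ler_wpM2r ?abs_nat_le1 // exprn_ge0 // ltW // invp_gt0.
Qed.

Lemma abs_natrB_modn_le n m L : n = m %[mod p ^ L] -> abs (n%:R - m%:R) <= invp ^+ L.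
Proof.
wlog le_mn : n m / (m <= n)%N => [wlog_le|].
  by case: (leqP m n) => [/wlog_le//|/ltnW le_nm eq_nm]; rewrite abs_distC wlog_le.
by move/eqP; rewrite eqn_mod_dvd // -natrB //; apply: abs_natr_dvd_le.
Qed.

Lemma abs_fact_ge k : invp ^+ k <= abs (k`!)%:R.
Proof.
rewrite abs_natr_logn ?fact_gt0 //.
by apply: (ler_wiXn2l (ltW invp_gt0) (ltW invp_lt1)); apply: logn_fact_le.
Qed.

Lemma natr_fact_neq0 k : (k`!)%:R != 0 :> K.
Proof.
apply: contraTneq (abs_fact_ge k) => ->; rewrite abs0 -ltNge.
by rewrite exprn_gt0 // invp_gt0.
Qed.

(* Since n choose k = n^_k / k! and |k!| >= p^-k, binomial coefficients are
   p-adically continuous in n with a loss of k digits. *)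
Lemma abs_binomB_le n m k L : n = m %[mod p ^ (L + k)] ->
  abs ('C(n, k)%:R - 'C(m, k)%:R) <= invp ^+ L.
Proof.
move=> eq_nm.
have : abs (('C(n, k)%:R - 'C(m, k)%:R) * (k`!)%:R) <= invp ^+ (L + k).
  rewrite mulrBl -!natrM !bin_ffact !natr_ffact.
  apply: (abs_prodB_le (a := fun i => n%:R - i%:R) (b := fun i => m%:R - i%:R)).
    by rewrite exprn_ge0 // ltW // invp_gt0.
  move=> i _; split; rewrite ?abs_natB_le1 //.
  by rewrite opprB addrA subrK; apply: abs_natrB_modn_le.
rewrite absM exprD => le_diff.
have invpk_gt0 : 0 < invp ^+ k by rewrite exprn_gt0 // invp_gt0.
rewrite -(ler_pM2r invpk_gt0); apply: le_trans le_diff.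
by rewrite ler_wpM2l ?abs_fact_ge.
Qed.

Hypothesis abs_complete : forall u, is_cauchy abs u -> exists l, is_lim abs u l.

Lemma abs_exp_term_le x k :
  abs (x ^+ k / (k`!)%:R) <= (abs x * (p%:R : R) `^ (p.-1%:R)^-1) ^+ k.
Proof.
have p_gt0 : (0 : R) < p%:R by rewrite ltr0n prime_gt0.
have pred_p_gt0 : (0 < p.-1)%N by have := prime_gt1 p_prime; lia.
rewrite absM absX absV abs_natr_logn ?fact_gt0 // exprMn.
apply: ler_wpM2l; first by rewrite exprn_ge0.
rewrite -exprVn invrK -(powR_mulrn _ (ltW p_gt0)) -(powR_mulrn _ (powR_ge0 _ _)) -powRrM.
apply: ler_powR; first by rewrite ler1n ltnW ?prime_gt1.
by rewrite ler_pdivlMl ?ltr0n // -natrM ler_nat legendre_le.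
Qed.

Lemma exp_partial_cvg x : abs x < (p%:R : R) `^ (- (p.-1%:R)^-1) ->
  exists e, is_lim abs (exp_partial x) e.
Proof.
move=> lt_x; set c := (p%:R : R) `^ (p.-1%:R)^-1.
have c_gt0 : 0 < c by rewrite powR_gt0 // ltr0n prime_gt0.
have q_lt1 : abs x * c < 1 by move: lt_x; rewrite powRN -ltr_pdivlMr // div1r.
have q_ge0 : 0 <= abs x * c by rewrite mulr_ge0 // ltW.
apply: abs_complete => eps eps_gt0.
have [N HN] := expr_eventually_lt q_ge0 q_lt1 eps_gt0.
suff tail_lt n m : (N <= n)%N -> (n <= m)%N ->
    abs (exp_partial x m - exp_partial x n) < eps.
  exists N => m n le_Nm le_Nn; case: (leqP n m) => [|/ltnW] le_nm; first exact: tail_lt.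
  by rewrite abs_distC tail_lt.
move=> le_Nn le_nm; apply: le_lt_trans (HN N (leqnn N)).
rewrite /exp_partial -!(big_mkord xpredT (fun k => x ^+ k / (k`!)%:R)).
rewrite (big_cat_nat (leq0n n) le_nm) /= addrC addrK big_nat_cond.
apply: abs_sum_le; first by rewrite exprn_ge0.
move=> k /andP[/andP[le_nk _] _]; apply: le_trans (abs_exp_term_le x k) _.
by apply: ler_wiXn2l => //; [exact: ltW | exact: leq_trans le_Nn le_nk].
Qed.

Section ExpCoefficients.
Variables (h : nat -> K) (r : R).
Hypotheses (r_ge0 : 0 <= r) (r_lt1 : r < 1) (h0 : h 0%N = 0)
  (le_h1 : abs (h 1%N) <= r) (le_h : forall l, abs (h l) <= 1).

Lemma abs_fact_fps_exp_term_le k j : (j <= k)%N ->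
  abs ((k`!)%:R * (fps_pow h j k / (j`!)%:R)) <=
  abs ('C(k, j) * (k - j)`!)%N%:R * r ^+ (2 * j - k).
Proof.
move=> le_jk.
have -> : (k`!)%:R * (fps_pow h j k / (j`!)%:R) =
    ('C(k, j) * (k - j)`!)%N%:R * fps_pow h j k.
  by rewrite -(bin_fact le_jk) !natrM; field; rewrite natr_fact_neq0.
by rewrite absM ler_wpM2l // abs_fps_pow_le // ltW.
Qed.

Lemma abs_fact_fps_exp_le1 k : abs ((k`!)%:R * fps_exp h k) <= 1.
Proof.
rewrite /fps_exp mulr_sumr; apply: abs_sum_le => // -[j lt_jk] _ /=.
apply: le_trans (abs_fact_fps_exp_term_le (ltnSE lt_jk)) _.
by rewrite mulr_ile1 ?abs_ge0 ?exprn_ge0 ?abs_nat_le1 ?exprn_ile1 // ltW.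
Qed.

(* Each term is small either because 2j - k is large, or because k - j is
   large and then (k - j)! is divisible by a high power of p. *)
Lemma fact_fps_exp_small eps : 0 < eps ->
  exists M, forall k, (M <= k)%N -> abs ((k`!)%:R * fps_exp h k) <= eps.
Proof.
move=> eps_gt0.
have [J HJ] := expr_eventually_lt r_ge0 r_lt1 eps_gt0.
have [L HL] := expr_eventually_lt (ltW invp_gt0) invp_lt1 eps_gt0.
exists (J + 2 * p * L)%N => k le_Mk.
rewrite /fps_exp mulr_sumr; apply: abs_sum_le; first exact: ltW.
move=> -[j lt_jk] _ /=; apply: le_trans (abs_fact_fps_exp_term_le (ltnSE lt_jk)) _.
have [le_J|lt_J] := leqP J (2 * j - k).
  rewrite -[eps]mul1r ler_pM ?abs_ge0 ?exprn_ge0 ?abs_nat_le1 //.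
  exact: ltW (HJ _ le_J).
have le_pL : (p * L <= k - j)%N by lia.
rewrite -[eps]mulr1 ler_pM ?abs_ge0 ?exprn_ge0 ?exprn_ile1 //; last exact: ltW.
apply: le_trans (ltW (HL L (leqnn L))).
by apply/abs_natr_dvd_le/dvdn_mull/dvdn_expn_fact.
Qed.

End ExpCoefficients.

Definition mahler (a : nat -> K) (n : nat) : K := \sum_(m < n.+1) 'C(n, m)%:R * a m.

Lemma mahler_widen (a : nat -> K) n N : (n < N)%N ->
  mahler a n = \sum_(m < N) 'C(n, m)%:R * a m.
Proof.
move=> lt_nN; rewrite /mahler (big_ord_widen _ (fun m => 'C(n, m)%:R * a m) lt_nN).
rewrite big_mkcond; apply: eq_bigr => m _.
by case: ifPn => // /negbTE; rewrite ltnS leqNgt => /negbFE/bin_small ->; rewrite mul0r.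
Qed.

Definition padic_unif_continuous (chi : nat -> K) :=
  forall eps : R, 0 < eps -> exists L : nat,
    forall n m : nat, n = m %[mod p ^ L] -> abs (chi n - chi m) < eps.

Lemma mahler_padic_unif_continuous (a : nat -> K) : (forall k, abs (a k) <= 1) ->
  (forall eps : R, 0 < eps -> exists M, forall k, (M <= k)%N -> abs (a k) <= eps) ->
  padic_unif_continuous (mahler a).
Proof.
move=> le_a small_a eps eps_gt0.
have eps2_gt0 : 0 < eps / 2 by rewrite divr_gt0.
have [M HM] := small_a _ eps2_gt0.
have [L HL] := expr_eventually_lt (ltW invp_gt0) invp_lt1 eps2_gt0.
exists (L + M)%N => n m eq_nm; apply: le_lt_trans (_ : eps / 2 < eps); last by lra.
have lt_n : (n < (n + m).+1)%N by rewrite ltnS leq_addr.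
have lt_m : (m < (n + m).+1)%N by rewrite ltnS leq_addl.
rewrite (mahler_widen a lt_n) (mahler_widen a lt_m) -sumrB.
apply: abs_sum_le => [|k _]; first exact: ltW.
rewrite -mulrBl absM; have [le_Mk|lt_kM] := leqP M k.
  by rewrite -[_ / 2]mul1r ler_pM ?abs_ge0 ?abs_natB_le1 ?HM.
rewrite -[_ / 2]mulr1 ler_pM ?abs_ge0 ?le_a //.
apply: le_trans (ltW (HL L (leqnn L))); apply: abs_binomB_le.
have dvd_p : (p ^ (L + k) %| p ^ (L + M))%N by rewrite dvdn_exp2l // leq_add2l ltnW.
by rewrite -(modn_dvdm n dvd_p) -(modn_dvdm m dvd_p) eq_nm.
Qed.

Lemma padic_unif_continuousZ (e : K) (chi : nat -> K) :
  padic_unif_continuous chi -> padic_unif_continuous (fun n => e * chi n).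
Proof.
move=> unif_chi eps eps_gt0.
have e1_gt0 : 0 < abs e + 1 by rewrite ltr_pwDr.
have [L HL] := unif_chi _ (divr_gt0 eps_gt0 e1_gt0).
exists L => n m eq_nm; rewrite -mulrBr absM.
have := HL n m eq_nm; have := abs_ge0 (chi n - chi m); have := abs_ge0 e.
rewrite ltr_pdivlMr //; nra.
Qed.

Lemma padic_unif_continuous_extension (chi : nat -> K) : padic_unif_continuous chi ->
  exists phi : Zpadic p -> K, Zp_continuous abs phi /\ forall n, phi (to_Zp p n) = chi n.
Proof.
move=> unif_chi.
have chi_cvg (x : Zpadic p) : exists l, is_lim abs (fun N => chi (sval x N)) l.
  apply: abs_complete => eps eps_gt0; have [L HL] := unif_chi _ eps_gt0.
  by exists L => m n le_Lm le_Ln; apply: HL; rewrite /= !Zpadic_modn.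
pose phi x := sval (cid (chi_cvg x)).
have phiP (x : Zpadic p) : is_lim abs (fun N => chi (sval x N)) (phi x).
  exact: svalP (cid (chi_cvg x)).
exists phi; split=> [x eps eps_gt0|n].
  have [L HL] := unif_chi _ eps_gt0; exists L => y eq_yx.
  have [N1 HN1] := phiP y _ eps_gt0; have [N2 HN2] := phiP x _ eps_gt0.
  pose N := maxn L (maxn N1 N2).
  have -> : phi y - phi x = - (chi (sval y N) - phi y) +
      (chi (sval y N) - chi (sval x N)) + (chi (sval x N) - phi x) by ring.
  apply: abs_add_lt; first apply: abs_add_lt.
  - by rewrite absN HN1 // (leq_trans (leq_maxl N1 N2)) ?leq_maxr.
  - by apply: HL; rewrite !Zpadic_modn ?leq_maxl.
  - by rewrite HN2 // (leq_trans (leq_maxr N1 N2)) ?leq_maxr.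
apply: (is_lim_unique (phiP (to_Zp p n))) => eps eps_gt0.
exists n => N le_nN /=; rewrite modn_small ?subrr ?abs0 //.
by apply: leq_trans (ltn_expl n (prime_gt1 p_prime)) _; rewrite leq_exp2l ?prime_gt1.
Qed.

Lemma Zp_continuous_eq (phi1 phi2 : Zpadic p -> K) :
  Zp_continuous abs phi1 -> Zp_continuous abs phi2 ->
  (forall n, phi1 (to_Zp p n) = phi2 (to_Zp p n)) -> phi1 = phi2.
Proof.
move=> cont1 cont2 eq_phi; apply: funext => x.
apply/eqP; rewrite -subr_eq0; apply/eqP/abs_lt_eq0 => eps eps_gt0.
have [L1 HL1] := cont1 x _ eps_gt0; have [L2 HL2] := cont2 x _ eps_gt0.
pose y := to_Zp p (sval x (maxn L1 L2)).
have yE k : (k <= maxn L1 L2)%N -> sval y k = sval x k by move=> le_k; rewrite /= Zpadic_modn.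
have -> : phi1 x - phi2 x = - (phi1 y - phi1 x) + (phi2 y - phi2 x) by rewrite eq_phi; ring.
by rewrite abs_add_lt ?absN ?HL1 ?HL2 ?yE ?leq_maxl ?leq_maxr.
Qed.

Lemma exp_drop_const_interpolation (f : nat -> K) (e : K) :
  (forall n, abs (f n) <= 1) -> abs (f 1%N - 1) < 1 ->
  exists! phi : Zpadic p -> K, Zp_continuous abs phi /\
    forall n, e * fps_exp (fps_drop_const f) n = phi (to_Zp p n) / (n`!)%:R.
Proof.
move=> le_f lt_f1.
pose h i := fps_drop_const f i - (i == 1%N)%:R.
have h0 : h 0%N = 0 by rewrite /h /fps_drop_const subrr.
have le_h1 : abs (h 1%N) <= abs (f 1%N - 1) by [].
have le_h l : abs (h l) <= 1.
  by case: l => [|[|l]]; rewrite /h /fps_drop_const /= ?subrr ?abs0 ?subr0 // ltW.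
pose a k := (k`!)%:R * fps_exp h k.
have fpsE n : (n`!)%:R * fps_exp (fps_drop_const f) n = mahler a n.
  rewrite /mahler /a (@fps_exp_X_add _ natr_fact_neq0 _ h) // => i.
  by rewrite /h addrC subrK.
have unif_chi : padic_unif_continuous (fun n => e * mahler a n).
  apply/padic_unif_continuousZ/mahler_padic_unif_continuous => [k|].
    exact: abs_fact_fps_exp_le1 (abs_ge0 _) lt_f1 h0 le_h1 le_h k.
  exact: fact_fps_exp_small (abs_ge0 _) lt_f1 h0 le_h1 le_h.
have [phi [phi_cont phiE]] := padic_unif_continuous_extension unif_chi.
exists phi; split=> [|psi [psi_cont psiE]].
  by split=> // n; rewrite phiE -fpsE; field; rewrite natr_fact_neq0.
apply: Zp_continuous_eq phi_cont psi_cont _ => n.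
by rewrite phiE -fpsE mulrCA psiE mulrCA mulfV ?mulr1 ?natr_fact_neq0.
Qed.

End PadicAbs.

End Ultrametric.

Unset Implicit Arguments.

Theorem proposition5p2 (p : nat) (R : realType) (K : fieldType) (abs : K -> R)
  (f : nat -> K) :
  prime p -> is_Cp abs p ->
  (forall n : nat, abs (f n) <= 1) ->
  abs (f 0%N) < (p%:R : R) `^ (- ((p.-1)%:R)^-1) ->
  abs (f 1%N - 1) < 1 ->
  (exists e : K, is_lim abs (exp_partial (f 0%N)) e) /\
  (forall e : K, is_lim abs (exp_partial (f 0%N)) e ->
    exists! phi : Zpadic p -> K,
      Zp_continuous abs phi /\
      forall n : nat,
        e * fps_exp (fps_drop_const f) n = phi (to_Zp p n) / (n`!)%:R).
Proof.
move=> p_prime [abs_ge0 abs_eq0 absM abs_ultra abs_p _ abs_complete _ _] le_f lt_f0 lt_f1.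
split=> [|e _].
  exact: (exp_partial_cvg abs_ge0 abs_eq0 absM abs_ultra p_prime abs_p
            abs_complete lt_f0).
exact: (exp_drop_const_interpolation abs_ge0 abs_eq0 absM abs_ultra p_prime abs_p
          abs_complete e le_f lt_f1).
Qed.
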